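(* Let $G\in\mathfrak{R}H^\infty_{m\times p}$, $K\in\mathfrak{R}H^\infty_{m\times q}$ and $F\in\mathfrak{R}H^\infty_{m\times r}$ be given by $G(z)=D_1+zC(I_n-zA)^{-1}B_1$, $K(z)=D_2+zC(I_n-zA)^{-1}B_2$, $F(z)=D_3+zC(I_n-zA)^{-1}B_3$, where $[G\ K]=[D_1\ D_2]+zC(I_n-zA)^{-1}[B_1\ B_2]$ is a minimal realization with $A$ stable $n\times n$, $T_GT_G^*-T_KT_K^*\ge0$, and $P_3+P_2-P_1\ge0$, with $P_j$ the controllability Gramian of $\{A,B_j\}$. If \[ T_GT_G^*-T_KT_K^*-T_FT_F^*=W_{obs}(P_3+P_2-P_1)W_{obs}^*, \] then, with $\Lambda(z)=C(I_n-zA)^{-1}(P_3+P_2-P_1)^{1/2}$, \[ \lambda\bar z\,\Lambda(\lambda)\Lambda(z)^*+G(\lambda)G(z)^*=\Lambda(\lambda)\Lambda(z)^*+K(\lambda)K(z)^*+F(\lambda)F(z)^*\qquad(z,\lambda\in\mathbb{D}). \]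
   Context: $\mathbb{D}$ is the open unit disc; a stable matrix has all eigenvalues in $\mathbb{D}$. $\mathfrak{R}H^\infty_{k\times l}$: $k\times l$ rational matrix functions without poles in the closed unit disc. Minimal realization: observable and controllable. $\ell^2_+(\mathbb{C}^k)$: square summable $\mathbb{C}^k$-valued sequences indexed by $j\ge0$; $T_\Omega$: block lower triangular Toeplitz operator with $(i,j)$ block $\Omega_{i-j}$, $\Omega_j$ the Taylor coefficients. $W_{obs}=\operatorname{col}(CA^j)_{j\ge0}$, $P_j=\sum_{\nu\ge0}A^\nu B_jB_j^*(A^* )^\nu$. *)

From HB Require Import structures.
From mathcomp Require Import all_boot all_order all_algebra.
From mathcomp Require Import complex.
From mathcomp Require Import all_classical all_reals all_analysis.
Set Implicit Arguments. Unset Strict Implicit. Unset Printing Implicit Defensive.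
Import Order.TTheory GRing.Theory Num.Theory.
Import numFieldNormedType.Exports.
Local Open Scope ring_scope.

Section Defs.
Variable C : numClosedFieldType.

Definition adjmx (m n : nat) (M : 'M[C]_(m, n)) : 'M[C]_(n, m) :=
  map_mx (fun x => x^*) M^T.

Definition stable (n : nat) (A : 'M[C]_n) : Prop :=
  forall a : C, eigenvalue A a -> `|a| < 1.

Definition observable (m n : nat) (Cm : 'M[C]_(m, n)) (A : 'M[C]_n) : Prop :=
  forall x : 'cV[C]_n, (forall j : nat, Cm *m (A ^+ j) *m x = 0) -> x = 0.

Definition controllable (n p : nat) (A : 'M[C]_n) (B : 'M[C]_(n, p)) : Prop :=
  forall y : 'rV[C]_n, (forall j : nat, y *m (A ^+ j) *m B = 0) -> y = 0.

Definition transfer (m n p : nat) (D : 'M[C]_(m, p)) (Cm : 'M[C]_(m, n))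
  (A : 'M[C]_n) (B : 'M[C]_(n, p)) (z : C) : 'M[C]_(m, p) :=
  D + z *: (Cm *m invmx (1%:M - z *: A) *m B).

(* Taylor coefficients at 0 of D + z C (I - zA)^{-1} B :
   Omega_0 = D, Omega_k = C A^(k-1) B for k >= 1 *)
Definition taylor_coef (m n p : nat) (D : 'M[C]_(m, p)) (Cm : 'M[C]_(m, n))
  (A : 'M[C]_n) (B : 'M[C]_(n, p)) (k : nat) : 'M[C]_(m, p) :=
  if k is k'.+1 then Cm *m (A ^+ k') *m B else D.

(* (i,j) block of T_Omega T_Omega^*, where T_Omega is the block lower
   triangular Toeplitz operator with (i,k) block Omega_(i-k) (k <= i):
   sum_(k <= min i j) Omega_(i-k) Omega_(j-k)^H *)
Definition TTstar_block (m p : nat) (Om : nat -> 'M[C]_(m, p)) (i j : nat)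
  : 'M[C]_m :=
  \sum_(k < (minn i j).+1) Om (i - k)%N *m adjmx (Om (j - k)%N).

(* a block operator on l^2_+(C^m), given by its blocks, is positive
   semidefinite: <M x, x> >= 0 for every finitely supported x *)
Definition block_op_psd (m : nat) (M : nat -> nat -> 'M[C]_m) : Prop :=
  forall (N : nat) (x : nat -> 'cV[C]_m),
    0 <= (\sum_(i < N) \sum_(j < N) adjmx (x i) *m M i j *m x j) 0 0.

Definition psdmx (n : nat) (P : 'M[C]_n) : Prop :=
  adjmx P = P /\ forall x : 'cV[C]_n, 0 <= (adjmx x *m P *m x) 0 0.

Definition gramian_partial (n p : nat) (A : 'M[C]_n) (B : 'M[C]_(n, p)) (N : nat)
  : 'M[C]_n :=
  \sum_(nu < N) (A ^+ nu) *m B *m adjmx B *m adjmx (A ^+ nu).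

End Defs.

Definition is_gramian (R : realType) (n p : nat) (A : 'M[complex R]_n)
  (B : 'M[complex R]_(n, p)) (P : 'M[complex R]_n) : Prop :=
  forall i j : 'I_n, ((fun N => (gramian_partial A B N i j : (complex R)^o)) @ \oo --> (P i j : (complex R)^o))%classic.

From HB Require Import structures.
From mathcomp Require Import all_boot all_order all_algebra.
From mathcomp Require Import complex.
From mathcomp Require Import all_classical all_reals all_analysis.
From mathcomp Require Import ring.
Import Order.TTheory GRing.Theory Num.Theory.
Local Open Scope ring_scope.

(* Comparing the blocks (0,0), (0,j+1) and (i+1,j+1) of the hypothesis with
   those one step back, observability of (C, A) yields the lossless relations
     Σ± D D^H = C P C^H,   Σ± D B^H = C P A^H,   Σ± B B^H = A P A^H - P,
   where Σ± is the combination 1 - 2 - 3 of the three realizations.  Writing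
   G(λ) G(z)^H through the resolvent C (I - λA)^-1, these relations turn
   Σ± G_k(λ) G_k(z)^H into (1 - λ z̄) C (I - λA)^-1 P (I - z̄ A^H)^-1 C^H. *)

Set Implicit Arguments.
Unset Strict Implicit.

Section Adjoint.
Variable C : numClosedFieldType.

Lemma adjmxK m n (M : 'M[C]_(m, n)) : adjmx (adjmx M) = M.
Proof. by apply/matrixP => i j; rewrite !mxE conjCK. Qed.

Lemma adjmx_inj m n : injective (@adjmx C m n).
Proof. exact: can_inj (@adjmxK m n). Qed.

Lemma adjmxM m n k (M : 'M[C]_(m, n)) (N : 'M[C]_(n, k)) :
  adjmx (M *m N) = adjmx N *m adjmx M.
Proof.
apply/matrixP => i j; rewrite !mxE rmorph_sum; apply: eq_bigr => l _.
by rewrite !mxE rmorphM mulrC.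
Qed.

Lemma adjmxB m n (M N : 'M[C]_(m, n)) : adjmx (M - N) = adjmx M - adjmx N.
Proof. by apply/matrixP => i j; rewrite !mxE rmorphB. Qed.

Lemma adjmxD m n (M N : 'M[C]_(m, n)) : adjmx (M + N) = adjmx M + adjmx N.
Proof. by apply/matrixP => i j; rewrite !mxE rmorphD. Qed.

Lemma adjmxZ m n a (M : 'M[C]_(m, n)) : adjmx (a *: M) = a^* *: adjmx M.
Proof. by apply/matrixP => i j; rewrite !mxE rmorphM. Qed.

Lemma adjmx1 n : adjmx (1%:M : 'M[C]_n) = 1%:M.
Proof. by apply/matrixP => i j; rewrite !mxE rmorph_nat eq_sym. Qed.

Lemma adjmx_exprSr n (A : 'M[C]_n) k :
  adjmx (A ^+ k.+1) = adjmx A *m adjmx (A ^+ k).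
Proof. by rewrite exprSr mulmxE adjmxM. Qed.

End Adjoint.

Section Observability.
Variables (C : numClosedFieldType) (m n : nat).
Variables (Cm : 'M[C]_(m, n)) (A : 'M[C]_n).
Hypothesis obsCA : observable Cm A.

Lemma observable_eq k (Y1 Y2 : 'M[C]_(n, k)) :
  (forall j, Cm *m A ^+ j *m Y1 = Cm *m A ^+ j *m Y2) -> Y1 = Y2.
Proof.
move=> eqY; apply/matrixP => i l; apply/eqP; rewrite -subr_eq0; apply/eqP.
have col0 : (Y1 - Y2) *m delta_mx l (0 : 'I_1) = 0.
  by apply: obsCA => j; rewrite mulmxA mulmxBr eqY subrr mul0mx.
by move/matrixP/(_ i 0): col0; rewrite -colE !mxE.
Qed.

Lemma observable_eq_adj k (Y1 Y2 : 'M[C]_(k, n)) :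
  (forall j, Y1 *m adjmx (Cm *m A ^+ j) = Y2 *m adjmx (Cm *m A ^+ j)) ->
  Y1 = Y2.
Proof.
move=> eqY; apply: adjmx_inj; apply: observable_eq => j.
by have := congr1 (@adjmx C _ _) (eqY j); rewrite !adjmxM !adjmxK.
Qed.

Lemma observable_sandwich_eq (X1 X2 : 'M[C]_n) :
  (forall i j, Cm *m A ^+ i *m X1 *m adjmx (Cm *m A ^+ j)
             = Cm *m A ^+ i *m X2 *m adjmx (Cm *m A ^+ j)) ->
  X1 = X2.
Proof. by move=> eqX; apply: observable_eq => i; apply: observable_eq_adj. Qed.

End Observability.

Lemma stable_resolvent_unitmx (C : numClosedFieldType) n (A : 'M[C]_n) z :
  stable A -> `|z| < 1 -> 1%:M - z *: A \in unitmx.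
Proof.
move=> stA z_lt1; rewrite unitmxE unitfE; apply/negP => /det0P [v v_neq0 hv].
have z_neq0 : z != 0.
  by apply: contra_neq v_neq0 => z0; rewrite -hv z0 scale0r subr0 mulmx1.
have : eigenvalue A z^-1.
  apply/eigenvalueP; exists v => //.
  move/eqP: hv; rewrite mulmxBr mulmx1 -scalemxAr subr_eq0 => /eqP hv.
  by rewrite {2}hv scalerA mulVf // scale1r.
move/stA; rewrite normfV invf_lt1 ?normr_gt0 // => /(lt_trans z_lt1).
by rewrite ltxx.
Qed.

Section ToeplitzBlocks.
Variables (C : numClosedFieldType) (m p : nat) (Om : nat -> 'M[C]_(m, p)).

Lemma TTstar_block0l j : TTstar_block Om 0 j = Om 0%N *m adjmx (Om j).
Proof. by rewrite /TTstar_block min0n big_ord1 !subn0. Qed.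

Lemma TTstar_blockSS i j :
  TTstar_block Om i.+1 j.+1 = Om i.+1 *m adjmx (Om j.+1) + TTstar_block Om i j.
Proof. by rewrite /TTstar_block minnSS big_ord_recl !subn0. Qed.

End ToeplitzBlocks.

Section Lossless.
Variables (C : numClosedFieldType) (m p q r n : nat).
Variables (A : 'M[C]_n) (Cm : 'M[C]_(m, n)).
Variables (B1 : 'M[C]_(n, p)) (B2 : 'M[C]_(n, q)) (B3 : 'M[C]_(n, r)).
Variables (D1 : 'M[C]_(m, p)) (D2 : 'M[C]_(m, q)) (D3 : 'M[C]_(m, r)).
Variable P : 'M[C]_n.
Hypothesis obsCA : observable Cm A.
Hypothesis blocks : forall i j : nat,
  TTstar_block (taylor_coef D1 Cm A B1) i j
  - TTstar_block (taylor_coef D2 Cm A B2) i j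
  - TTstar_block (taylor_coef D3 Cm A B3) i j
  = Cm *m A ^+ i *m P *m adjmx (A ^+ j) *m adjmx Cm.

Lemma lossless_DD :
  D1 *m adjmx D1 - D2 *m adjmx D2 - D3 *m adjmx D3 = Cm *m P *m adjmx Cm.
Proof. by have := blocks 0 0; rewrite !TTstar_block0l expr0 adjmx1 !mulmx1. Qed.

Lemma lossless_DB :
  D1 *m adjmx B1 - D2 *m adjmx B2 - D3 *m adjmx B3 = Cm *m P *m adjmx A.
Proof.
apply: (observable_eq_adj obsCA) => j.
have := blocks 0 j.+1; rewrite !TTstar_block0l /= adjmx_exprSr expr0 mulmx1.
by rewrite !adjmxM !mulmxBl !mulmxA.
Qed.

Lemma lossless_BB :
  B1 *m adjmx B1 - B2 *m adjmx B2 - B3 *m adjmx B3 = A *m P *m adjmx A - P.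
Proof.
apply: (observable_sandwich_eq obsCA) => i j.
have regroup (a b c d e f : 'M[C]_m) :
    a + d - (b + e) - (c + f) = (a - b - c) + (d - e - f).
  by apply/matrixP => k l; rewrite !mxE; ring.
have := blocks i.+1 j.+1; rewrite !TTstar_blockSS regroup blocks /=.
move=> /(canRL (addrK _)).
rewrite !adjmxM exprSr adjmx_exprSr !mulmxE !mulmxA => eq_blocks.
by rewrite !mulmxBr !mulmxBl !mulmxA eq_blocks.
Qed.

End Lossless.

Section GramKernel.
Variables (C : numClosedFieldType) (m n : nat).
Variables (Cm : 'M[C]_(m, n)) (A : 'M[C]_n).

Definition out_resolvent (z : C) : 'M[C]_(m, n) :=
  Cm *m invmx (1%:M - z *: A).

(* G(l) G(z)^H written in terms of the data D D^H, D B^H, B B^H only. *)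
Definition gram_kernel (X : 'M[C]_m) (Y : 'M[C]_(m, n)) (Z : 'M[C]_n)
    (l z : C) : 'M[C]_m :=
  X + z^* *: (Y *m adjmx (out_resolvent z))
    + l *: (out_resolvent l *m adjmx Y)
    + (l * z^*) *: (out_resolvent l *m Z *m adjmx (out_resolvent z)).

Lemma gram_kernelB X1 X2 Y1 Y2 Z1 Z2 l z :
  gram_kernel (X1 - X2) (Y1 - Y2) (Z1 - Z2) l z
  = gram_kernel X1 Y1 Z1 l z - gram_kernel X2 Y2 Z2 l z.
Proof.
rewrite /gram_kernel adjmxB !(mulmxBl, mulmxBr, scalerBr).
by apply/matrixP => i j; rewrite !mxE; ring.
Qed.

Lemma transfer_gram_kernel k (D : 'M[C]_(m, k)) (B : 'M[C]_(n, k)) l z :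
  transfer D Cm A B l *m adjmx (transfer D Cm A B z)
  = gram_kernel (D *m adjmx D) (D *m adjmx B) (B *m adjmx B) l z.
Proof.
rewrite /transfer /gram_kernel /out_resolvent adjmxD adjmxZ !adjmxM adjmxK.
rewrite mulmxDl !mulmxDr -!scalemxAl -!scalemxAr scalerA !mulmxA.
by rewrite !addrA [l * _]mulrC.
Qed.

Lemma transfer_gram_kernelB3 p q r (D1 : 'M[C]_(m, p)) (B1 : 'M[C]_(n, p))
    (D2 : 'M[C]_(m, q)) (B2 : 'M[C]_(n, q))
    (D3 : 'M[C]_(m, r)) (B3 : 'M[C]_(n, r)) l z :
  transfer D1 Cm A B1 l *m adjmx (transfer D1 Cm A B1 z)
  - transfer D2 Cm A B2 l *m adjmx (transfer D2 Cm A B2 z)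
  - transfer D3 Cm A B3 l *m adjmx (transfer D3 Cm A B3 z)
  = gram_kernel (D1 *m adjmx D1 - D2 *m adjmx D2 - D3 *m adjmx D3)
                (D1 *m adjmx B1 - D2 *m adjmx B2 - D3 *m adjmx B3)
                (B1 *m adjmx B1 - B2 *m adjmx B2 - B3 *m adjmx B3) l z.
Proof. by rewrite !gram_kernelB !transfer_gram_kernel. Qed.

Lemma resolvent_kernel_identity k (U : 'M[C]_(k, n)) (V : 'M[C]_(n, k))
    (A' X : 'M[C]_n) (l w : C) :
  U *m (1%:M - l *: A) *m X *m (1%:M - w *: A') *m V
  + w *: (U *m (1%:M - l *: A) *m X *m A' *m V)
  + l *: (U *m A *m X *m (1%:M - w *: A') *m V)
  + (l * w) *: (U *m (A *m X *m A' - X) *m V)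
  = (1 - l * w) *: (U *m X *m V).
Proof.
rewrite !(mulmxBl, mulmxBr, mulmx1, mul1mx, mulmxA).
rewrite -!(scalemxAl, scalemxAr) !(mulmxA, scalerBr, scalerA).
move: (U *m A *m X *m A' *m V) (U *m X *m A' *m V) (U *m A *m X *m V)
  (U *m X *m V) => UAXA'V UXA'V UAXV UXV.
by apply/matrixP => i j; rewrite !mxE; ring.
Qed.

Lemma gram_kernel_lossless (P : 'M[C]_n) l z :
  adjmx P = P ->
  1%:M - l *: A \in unitmx -> 1%:M - z *: A \in unitmx ->
  gram_kernel (Cm *m P *m adjmx Cm) (Cm *m P *m adjmx A)
              (A *m P *m adjmx A - P) l z
  = (1 - l * z^*) *: (out_resolvent l *m P *m adjmx (out_resolvent z)).
Proof.
move=> herP unit_l unit_z.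
have Cm_res x : 1%:M - x *: A \in unitmx ->
    Cm = out_resolvent x *m (1%:M - x *: A).
  by move=> unit_x; rewrite /out_resolvent -mulmxA mulVmx // mulmx1.
have Cm_z : adjmx Cm = (1%:M - z^* *: adjmx A) *m adjmx (out_resolvent z).
  by rewrite {1}(Cm_res z unit_z) adjmxM adjmxB adjmx1 adjmxZ.
have adj_CPA : adjmx (Cm *m P *m adjmx A) = A *m P *m adjmx Cm.
  by rewrite !adjmxM herP adjmxK mulmxA.
rewrite /gram_kernel adj_CPA Cm_z (Cm_res l unit_l).
by rewrite -(resolvent_kernel_identity _ _ (adjmx A)) !mulmxA.
Qed.

End GramKernel.

Lemma scale_add_eq_of_sub (R : pzRingType) (V : lmodType R) (c : R)
    (x k1 k2 k3 : V) :
  k1 - k2 - k3 = (1 - c) *: x -> c *: x + k1 = x + k2 + k3.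
Proof.
move=> diffE; rewrite -[k1](subrK k3) -[k1 - k3](subrK k2) (addrAC k1) diffE.
by rewrite scalerBl scale1r !addrA (addrC (c *: x)) addrK.
Qed.

Unset Implicit Arguments.

Theorem lemma4p1 (R : realType) (m p q r n : nat)
  (A : 'M[complex R]_n) (Cm : 'M[complex R]_(m, n))
  (B1 : 'M[complex R]_(n, p)) (B2 : 'M[complex R]_(n, q)) (B3 : 'M[complex R]_(n, r))
  (D1 : 'M[complex R]_(m, p)) (D2 : 'M[complex R]_(m, q)) (D3 : 'M[complex R]_(m, r))
  (P1 P2 P3 Q : 'M[complex R]_n) :
  stable A ->
  observable Cm A ->
  controllable A (row_mx B1 B2) ->
  is_gramian A B1 P1 -> is_gramian A B2 P2 -> is_gramian A B3 P3 ->
  block_op_psd (fun i j => TTstar_block (taylor_coef D1 Cm A B1) i j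
                         - TTstar_block (taylor_coef D2 Cm A B2) i j) ->
  psdmx (P3 + P2 - P1) ->
  (* Q = (P3 + P2 - P1)^(1/2), the positive semidefinite square root *)
  psdmx Q -> Q *m Q = P3 + P2 - P1 ->
  (forall i j : nat,
     TTstar_block (taylor_coef D1 Cm A B1) i j
     - TTstar_block (taylor_coef D2 Cm A B2) i j
     - TTstar_block (taylor_coef D3 Cm A B3) i j
     = Cm *m A ^+ i *m (P3 + P2 - P1) *m adjmx (A ^+ j) *m adjmx Cm) ->
  let Lambda := fun z : complex R => Cm *m invmx (1%:M - z *: A) *m Q in
  forall z lambda : complex R, `|z| < 1 -> `|lambda| < 1 ->
    (lambda * z^*) *: (Lambda lambda *m adjmx (Lambda z))
    + transfer D1 Cm A B1 lambda *m adjmx (transfer D1 Cm A B1 z)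
    = Lambda lambda *m adjmx (Lambda z)
      + transfer D2 Cm A B2 lambda *m adjmx (transfer D2 Cm A B2 z)
      + transfer D3 Cm A B3 lambda *m adjmx (transfer D3 Cm A B3 z).
Proof.
move=> stA obsCA _ _ _ _ _ [herP _] [herQ _] QQ blocks Lambda z l z_lt1 l_lt1.
have LambdaE : Lambda l *m adjmx (Lambda z)
    = out_resolvent Cm A l *m (P3 + P2 - P1) *m adjmx (out_resolvent Cm A z).
  by rewrite /Lambda adjmxM herQ -QQ !mulmxA.
rewrite LambdaE; apply: (scale_add_eq_of_sub (V := 'M[R[i]]_m)).
rewrite transfer_gram_kernelB3.
rewrite (lossless_DD blocks) (lossless_DB obsCA blocks) (lossless_BB obsCA blocks).
by apply: gram_kernel_lossless => //; apply: stable_resolvent_unitmx.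
Qed.
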